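(* Let $X$ be a finite set of proposals with $|X|\geq 3$. No profile-index-based DSF $\Delta_\delta$ induced by a neutral profile index function $\delta$ satisfies Position Unanimity.
   Context: $X!$ is the set of strict linear orders on $X$; a profile is a function $R:N\to X!$ with $N\subset\mathbb{N}$ finite and nonempty. A profile is unanimous if all agents report the same ranking. A profile index function is a function $\delta$ from the set of all profiles to $\mathbb{R}$; it is neutral if $\delta(R)=\delta(\sigma(R))$ for every permutation $\sigma:X\to X$ (applied to rename proposals in every ranking). $R^{\hat{x}}$ denotes the profile obtained from $R$ by moving $x$ to the top of every agent's ranking (other proposals keep their relative order), and $\Delta_\delta(R)=\arg\min_{x\in X}\delta(R^{\hat{x}})$. A proposal $x$ occurs in the same position throughout $R$ if the number of proposals ranked above $x$ is the same in every agent's ranking. Position Unanimity: $x\notin\Delta(R)$ for every non-unanimous profile $R$ and every proposal $x$ occurring in the same position throughout $R$. *)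

From HB Require Import structures.
From mathcomp Require Import all_boot all_order all_algebra.
From mathcomp Require Import fingroup perm.
From mathcomp Require Import finmap.
From mathcomp Require Import reals.

Set Implicit Arguments.
Unset Strict Implicit.
Unset Printing Implicit Defensive.

Import Order.TTheory GRing.Theory Num.Theory.
Local Open Scope fset_scope.

Section Defs.
Variable X : finType.

(* r x y : x is ranked strictly above y. *)
Definition strict_linear (r : rel X) : bool :=
  [&& [forall x, ~~ r x x],
      [forall x, forall y, forall z, r x y ==> r y z ==> r x z] &
      [forall x, forall y, (x != y) ==> (r x y || r y x)]].

Definition ranking := {r : rel X | strict_linear r}.

Definition rk (o : ranking) : rel X := sval o.

Record profile := Profile {
  agents : {fset nat};
  agents_nonempty : agents != fset0;
  prefs : {ffun agents -> ranking}
}.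

Definition unanimous (P : profile) : Prop :=
  forall i j : agents P, prefs P i = prefs P j.

(* renaming proposals by a permutation s: s a takes the place of a *)
Definition rename_rel (s : {perm X}) (r : rel X) : rel X :=
  fun a b => r ((s^-1)%g a) ((s^-1)%g b).

Lemma rename_rel_lin (s : {perm X}) (o : ranking) :
  strict_linear (rename_rel s (rk o)).
Proof.
case: o => r /= /and3P [/forallP Hi /forallP Ht /forallP Hc].
apply/and3P; split.
- by apply/forallP => x; rewrite /rename_rel Hi.
- apply/forallP => x; apply/forallP => y; apply/forallP => z.
  exact: (forallP (forallP (Ht _) _) _).
- apply/forallP => x; apply/forallP => y; apply/implyP => nxy.
  apply: (implyP (forallP (Hc _) _)).
  by apply: contra nxy => /eqP /(congr1 s); rewrite !permKV => ->.
Qed.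

Definition rename_ranking (s : {perm X}) (o : ranking) : ranking :=
  exist _ (rename_rel s (rk o)) (rename_rel_lin s o).

Definition rename_profile (s : {perm X}) (P : profile) : profile :=
  Profile (agents_nonempty P) [ffun i => rename_ranking s (prefs P i)].

Definition top_rel (x : X) (r : rel X) : rel X :=
  fun a b => (b != x) && ((a == x) || r a b).

Lemma top_rel_lin (x : X) (o : ranking) : strict_linear (top_rel x (rk o)).
Proof.
case: o => r /= /and3P [/forallP Hi /forallP Ht /forallP Hc].
apply/and3P; split.
- apply/forallP => a; rewrite /top_rel.
  by case: (a =P x) => //= _; rewrite Hi.
- apply/forallP => a; apply/forallP => b; apply/forallP => c.
  rewrite /top_rel; apply/implyP => /andP [nbx /orP [/eqP ->|rab]];
    apply/implyP => /andP [ncx].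
    by rewrite ncx eqxx.
  rewrite (negbTE nbx) /= => rbc; rewrite ncx /=.
  by rewrite (implyP (implyP (forallP (forallP (Ht a) b) c) rab) rbc) orbT.
- apply/forallP => a; apply/forallP => b; apply/implyP => nab.
  rewrite /top_rel.
  have [ax|nax] := eqVneq a x.
    by subst a; rewrite /= andbT orbF eq_sym.
  have [bx|nbx] := eqVneq b x.
    by subst b.
  rewrite /=.
  exact: (implyP (forallP (Hc a) b) nab).
Qed.

Definition top_ranking (x : X) (o : ranking) : ranking :=
  exist _ (top_rel x (rk o)) (top_rel_lin x o).

Definition top_profile (x : X) (P : profile) : profile :=
  Profile (agents_nonempty P) [ffun i => top_ranking x (prefs P i)].

Definition position (o : ranking) (x : X) : nat := #|[pred y | rk o y x]|.

Definition same_position (P : profile) (x : X) : Prop :=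
  forall i j : agents P, position (prefs P i) x = position (prefs P j) x.

Section Index.
Variable R : realType.

Definition neutral (delta : profile -> R) : Prop :=
  forall (s : {perm X}) (P : profile), delta P = delta (rename_profile s P).

Definition in_Delta (delta : profile -> R) (P : profile) (x : X) : Prop :=
  forall y : X, (delta (top_profile x P) <= delta (top_profile y P))%R.

Definition position_unanimity (delta : profile -> R) : Prop :=
  forall (P : profile) (x : X),
    ~ unanimous P -> same_position P x -> ~ in_Delta delta P x.

End Index.
End Defs.

(* Enumerate X as x_0, ..., x_(n-1) and let j be 1 if n is even, 0 otherwise.
   In the two-agent profile where the first agent ranks x_0 > ... > x_(n-1) and
   the second keeps x_0, ..., x_(j-1) on top but reverses the remaining
   proposals, each of x_0, ..., x_(j-1) and the middle proposal x_(n/2) occupies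
   the same position in both rankings.  For k >= j the proposals x_k and x_(k+1)
   are consecutive in both rankings, so the transposition exchanging them maps
   R^(x_k) onto R^(x_(k+1)); by neutrality delta(R^x) is the same for all these
   x.  Hence delta(R^x) attains its minimum at one of x_0, ..., x_(j-1), x_(n/2),
   which contradicts Position Unanimity. *)

From mathcomp Require Import all_boot all_order all_algebra.
From mathcomp Require Import fingroup perm.
From mathcomp Require Import finmap.
From mathcomp Require Import reals.
From mathcomp Require Import zify.

Set Implicit Arguments.
Unset Strict Implicit.
Unset Printing Implicit Defensive.

Import Order.TTheory.

Section Rankings.
Variable X : finType.
Implicit Types (o : ranking X) (a b c : X).

Lemma rk_irr o a : rk o a a = false.
Proof. by case: o => r /= /and3P [/forallP/(_ a) /negbTE]. Qed.

Lemma rk_trans o a b c : rk o a b -> rk o b c -> rk o a c.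
Proof.
case: o => r /= /and3P [_ /forallP/(_ a)/forallP/(_ b)/forallP/(_ c)/implyP tr _].
by move=> /tr/implyP.
Qed.

Lemma rk_asym o a b : rk o a b -> rk o b a = false.
Proof. by move=> rab; apply/negbTE/negP => /(rk_trans rab); rewrite rk_irr. Qed.

Lemma rk_total o a b : a != b -> rk o a b || rk o b a.
Proof. by case: o => r /= /and3P [_ _ /forallP/(_ a)/forallP/(_ b)/implyP]. Qed.

Lemma rk_antisym o a b : a != b -> rk o b a = ~~ rk o a b.
Proof.
by move=> /(rk_total o) /orP [rab|rba]; rewrite ?rab ?(rk_asym rab) ?rba ?(rk_asym rba).
Qed.

Definition adjacent (r : rel X) a b : Prop :=
  forall c, c != a -> c != b -> r a c = r b c.

Lemma adjacent_sym (r : rel X) a b : adjacent r a b -> adjacent r b a.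
Proof. by move=> adj c cb ca; rewrite adj. Qed.

Lemma top_rel_tperm o a b u v : adjacent (rk o) a b ->
  top_rel a (rk o) (tperm a b u) (tperm a b v) = top_rel b (rk o) u v.
Proof.
move=> adj; have [<-|ab] := eqVneq a b; first by rewrite tperm1 !perm1.
have adj_left c : c != a -> c != b -> rk o c a = rk o c b.
  by move=> ca cb; rewrite !(rk_antisym o (b := c)) 1?eq_sym // adj.
rewrite /top_rel; case: tpermP => [->|->|/eqP ua /eqP ub];
  case: tpermP => [->|->|/eqP va /eqP vb];
  rewrite ?eqxx ?rk_irr ?(eq_sym b) ?(negbTE ab) ?(negbTE ua) ?(negbTE ub)
          ?(negbTE va) ?(negbTE vb) ?andbF //=.
all: by rewrite (adj, adj_left).
Qed.

Lemma rename_top_profile_tperm (P : profile X) a b :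
    (forall i, adjacent (rk (prefs P i)) a b) ->
  rename_profile (tperm a b) (top_profile a P) = top_profile b P.
Proof.
move=> adj; congr Profile; apply/ffunP => i; rewrite !ffunE; apply: val_inj.
apply: boolp.funext => u; apply: boolp.funext => v.
by rewrite /= /rename_rel tpermV top_rel_tperm.
Qed.

Lemma neutral_top_profile_adjacent (R : realType) (delta : profile X -> R)
    (P : profile X) a b :
    neutral delta -> (forall i, adjacent (rk (prefs P i)) a b) ->
  delta (top_profile a P) = delta (top_profile b P).
Proof. by move=> neu adj; rewrite (neu (tperm a b)) rename_top_profile_tperm. Qed.

Lemma exists_in_Delta (R : realType) (delta : profile X -> R) (P : profile X) :
  X -> exists x, in_Delta delta P x.
Proof.
move=> x0; case: (@arg_minP _ _ _ x0 xpredT (fun x => delta (top_profile x P))) => //.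
by move=> x _ min_x; exists x => y; apply: min_x.
Qed.

End Rankings.

Section KeyRanking.
Variables (X : finType) (key : X -> nat).
Hypothesis key_inj : injective key.

Definition key_rel : rel X := fun a b => key a < key b.

Lemma key_rel_linear : strict_linear key_rel.
Proof.
apply/and3P; split; apply/forallP => a.
- by rewrite /key_rel ltnn.
- apply/forallP => b; apply/forallP => c.
  by apply/implyP => ab; apply/implyP; apply: ltn_trans.
- apply/forallP => b; apply/implyP => ab; rewrite /key_rel -neq_ltn.
  by apply: contra ab => /eqP/key_inj ->.
Qed.

Definition key_ranking : ranking X := exist _ key_rel key_rel_linear.

Lemma position_key_ranking x :
  (forall a, key a < #|X|) -> position key_ranking x = key x.
Proof.
move=> key_lt; have key_perm : perm_eq (map key (enum X)) (iota 0 #|X|).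
  have key_uniq : uniq (map key (enum X)) by rewrite map_inj_uniq ?enum_uniq.
  apply: uniq_perm (iota_uniq 0 #|X|) (uniq_min_size key_uniq _ _).2 => //.
  - by move=> _ /mapP[a _ ->]; rewrite mem_iota key_lt.
  - by rewrite size_map size_iota -cardT.
rewrite /position cardE /enum_mem size_filter -enumT.
rewrite (eq_count (a2 := preim key [pred k | k < key x])) // -count_map (seq.permP key_perm).
by rewrite -size_filter (filter_iota_ltn 0) ?size_iota // ltnW.
Qed.

Lemma key_rel_adjacent a b : key b = (key a).+1 -> adjacent key_rel a b.
Proof.
move=> kb c ca cb; rewrite /key_rel kb.
have /eqP : key c != key a by apply: contra ca => /eqP/key_inj ->.
have /eqP : key c != key b by apply: contra cb => /eqP/key_inj ->.
rewrite kb; lia.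
Qed.

End KeyRanking.

Section PairProfile.
Variables (X : finType) (o1 o2 : ranking X).

Local Open Scope fset_scope.

Definition pair_agents : {fset nat} := [fset 0; 1]%N.

Lemma pair_agents_neq0 : pair_agents != fset0.
Proof. by apply/fset0Pn; exists 0%N; rewrite !inE. Qed.

Definition pair_profile : profile X :=
  Profile pair_agents_neq0 [ffun i : pair_agents => if val i == 0%N then o1 else o2].

Lemma pair_profile_prefs (i : agents pair_profile) :
  prefs pair_profile i = o1 \/ prefs pair_profile i = o2.
Proof. by rewrite ffunE; case: ifP; [left | right]. Qed.

Lemma pair_profile_unanimous : unanimous pair_profile -> o1 = o2.
Proof.
have a0 : 0%N \in pair_agents by rewrite !inE.
have a1 : 1%N \in pair_agents by rewrite !inE.
by move=> /(_ [` a0] [` a1]); rewrite !ffunE.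
Qed.

Lemma same_position_pair_profile x :
  position o1 x = position o2 x -> same_position pair_profile x.
Proof.
by move=> E i j; case: (pair_profile_prefs i) => ->; case: (pair_profile_prefs j) => ->.
Qed.

Lemma pair_profile_adjacent a b :
    adjacent (rk o1) a b -> adjacent (rk o2) a b ->
  forall i, adjacent (rk (prefs pair_profile i)) a b.
Proof. by move=> adj1 adj2 i; case: (pair_profile_prefs i) => ->. Qed.

End PairProfile.

(* Fixes [0, j) and reverses [j, n). *)
Definition rev_from (n j p : nat) : nat := if p < j then p else n + j - p.+1.

Lemma rev_fromK n j p : p < n -> rev_from n j (rev_from n j p) = p.
Proof. by rewrite /rev_from => pn; case: (ltnP p j) => [->|pj] //; case: ltnP; lia. Qed.

Lemma rev_from_lt n j p : p < n -> rev_from n j p < n.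
Proof. by rewrite /rev_from; case: ifP; lia. Qed.

Lemma rev_from_middle n : rev_from n (~~ odd n) n./2 = n./2.
Proof.
rewrite /rev_from; case: ifP => // _.
by have := odd_double_half n; case: (odd n) => /=; lia.
Qed.

Section IndexRankings.
Variable X : finType.
Implicit Types a b x : X.

Definition idx a : nat := enum_rank a.

Lemma idx_inj : injective idx.
Proof. by move=> a b /val_inj/enum_rank_inj. Qed.

Lemma idx_lt a : idx a < #|X|.
Proof. exact: ltn_ord. Qed.

Lemma idx_surj k : k < #|X| -> exists a, idx a = k.
Proof. by move=> k_lt; exists (enum_val (Ordinal k_lt)); rewrite /idx enum_valK. Qed.

Lemma eq_from_idx_succ (T : Type) (f : X -> T) j :
    (forall a b, j <= idx a -> idx b = (idx a).+1 -> f a = f b) ->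
  forall a b, j <= idx a -> j <= idx b -> f a = f b.
Proof.
move=> f_succ; suff f_up d a b : j <= idx a -> idx b = idx a + d -> f a = f b.
  move=> a b ja jb; case: (leqP (idx a) (idx b)) => [ab|/ltnW ba].
    by apply: (f_up (idx b - idx a)) => //; rewrite subnKC.
  by apply/esym/(f_up (idx a - idx b)) => //; rewrite subnKC.
elim: d b => [|d IHd] b ja idx_b; first by apply/congr1/idx_inj; rewrite idx_b addn0.
have [c idx_c] : exists c, idx c = idx a + d.
  by apply: idx_surj; have := idx_lt b; lia.
by rewrite (IHd c) //; apply: f_succ; lia.
Qed.

Definition idx_ranking : ranking X := key_ranking idx_inj.

Lemma rev_idx_inj j : injective (fun a => rev_from #|X| j (idx a)).
Proof.
by move=> a b /(congr1 (rev_from #|X| j)); rewrite !rev_fromK ?idx_lt // => /idx_inj.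
Qed.

Definition rev_idx_ranking j : ranking X := key_ranking (@rev_idx_inj j).

Lemma position_idx_ranking x : position idx_ranking x = idx x.
Proof. exact/position_key_ranking/idx_lt. Qed.

Lemma position_rev_idx_ranking j x :
  position (rev_idx_ranking j) x = rev_from #|X| j (idx x).
Proof. by apply: position_key_ranking => a; rewrite rev_from_lt ?idx_lt. Qed.

Lemma idx_ranking_adjacent a b :
  idx b = (idx a).+1 -> adjacent (rk idx_ranking) a b.
Proof. exact: (key_rel_adjacent idx_inj). Qed.

Lemma rev_idx_ranking_adjacent j a b : j <= idx a -> idx b = (idx a).+1 ->
  adjacent (rk (rev_idx_ranking j)) a b.
Proof.
move=> ja ab; apply/adjacent_sym/(key_rel_adjacent (@rev_idx_inj j)).
by rewrite /rev_from; have := idx_lt b; do 2 case: ifP; lia.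
Qed.

Lemma idx_ranking_neq_rev j : j.+1 < #|X| -> idx_ranking <> rev_idx_ranking j.
Proof.
move=> j_lt; have [a idx_a] := idx_surj (ltnW j_lt); have [b idx_b] := idx_surj j_lt.
move/(congr1 (fun o => rk o a b)); rewrite /= /key_rel /rev_from idx_a idx_b.
by do 2 case: ifP; lia.
Qed.

End IndexRankings.

Theorem theorem2 (X : finType) (R : realType) :
  3 <= #|X| ->
  forall delta : profile X -> R,
    neutral delta -> ~ position_unanimity delta.
Proof.
move=> X_ge3 delta neu PU.
(* [n - j] is odd, so reversing [j, n) fixes its middle [n./2]. *)
pose j : nat := ~~ odd #|X|.
pose P := pair_profile (idx_ranking X) (rev_idx_ranking X j).
have P_not_unanimous : ~ unanimous P.
  by move/pair_profile_unanimous; apply: idx_ranking_neq_rev; rewrite /j; case: odd; lia.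
have P_same_position x : rev_from #|X| j (idx x) = idx x -> same_position P x.
  move=> fix_x; apply: same_position_pair_profile.
  by rewrite position_idx_ranking position_rev_idx_ranking fix_x.
have delta_flat : forall a b, j <= idx a -> j <= idx b ->
    delta (top_profile a P) = delta (top_profile b P).
  apply: eq_from_idx_succ => a b ja ab; apply: neutral_top_profile_adjacent => //.
  exact: pair_profile_adjacent (idx_ranking_adjacent ab) (rev_idx_ranking_adjacent ja ab).
have [m idx_m] : exists m : X, idx m = #|X|./2.
  by apply: idx_surj; rewrite -divn2 ltn_divLR //; lia.
have [x x_min] := exists_in_Delta delta P m.
case: (ltnP (idx x) j) => [xj | jx].
  by apply: (PU P x P_not_unanimous _ x_min); apply: P_same_position; rewrite /rev_from xj.
apply: (PU P m P_not_unanimous).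
  by apply: P_same_position; rewrite idx_m rev_from_middle.
by move=> y; rewrite (delta_flat m x) // idx_m /j; case: odd; rewrite -divn2 leq_divRL //; lia.
Qed.
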